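(* Let $d\geq 2$ and $k\geq 1$. For every simplicial complex $\mathsf{X}^d_k$ constructed as below (with any choices), $\mathsf{X}^d_k$ has $k(d+2)$ vertices, $\tau(\mathcal{F}(\mathsf{X}^d_k))=2k$, and no transversal of $\mathcal{F}(\mathsf{X}^d_k)$ of size $2k$ contains all vertices of a facet of $\mathsf{X}^d_k$ that contains the apex vertex of $\mathsf{X}^d_k$.
   Context: Connected sum: for PL $d$-spheres $\mathsf{K}_1,\mathsf{K}_2$, facets $f_i$ of $\mathsf{K}_i$ and a bijection $\psi:f_1\to f_2$, $\mathsf{K}_1\#_\psi\mathsf{K}_2=\big((\mathsf{K}_1\setminus\{f_1\})\sqcup(\mathsf{K}_2\setminus\{f_2\})\big)/\sim_\psi$, identifying every proper subface $g_1$ of $f_1$ with $\psi(g_1)$. Let $\mathsf{S}^d$ be the boundary complex of the abstract $(d+1)$-simplex on $d+2$ vertices, and $\mathsf{C}^d=\mathsf{S}^0*\cdots*\mathsf{S}^0$ ($(d+1)$-fold join) the boundary complex of the $(d+1)$-dimensional cross polytope, with its antipodal involution on vertices; the antipodal facet of a facet $f$ of $\mathsf{C}^d$ is the set of antipodes of its vertices. Let $\mathsf{C}^d_+=\mathsf{C}^d\#_{\psi_S}\mathsf{S}^d$ for a facet $f$ of $\mathsf{C}^d$, a facet $g$ of $\mathsf{S}^d$ and a bijection $\psi_S:f\to g$; its apex vertex is the vertex of $\mathsf{S}^d$ not in $g$, and its base facet is the facet of $\mathsf{C}^d$ antipodal to $f$. Define $\mathsf{X}^d_1=\mathsf{S}^d$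 with an arbitrary vertex chosen as apex vertex. For $k\geq 2$, $\mathsf{X}^d_k=\mathsf{X}^d_{k-1}\#_{\psi_k}\mathsf{C}^d_+$ where $\psi_k$ is any bijection from a facet $f_{k-1}$ of $\mathsf{X}^d_{k-1}$ containing the apex vertex of $\mathsf{X}^d_{k-1}$ to the base facet of $\mathsf{C}^d_+$; the apex vertex of $\mathsf{X}^d_k$ is the apex vertex of this copy of $\mathsf{C}^d_+$. $\mathcal{F}(\cdot)$ is the facet hypergraph and $\tau$ the minimum size of a vertex set meeting all facets (a transversal). *)

From mathcomp Require Import all_boot all_order.
From mathcomp Require Import finmap.
Set Implicit Arguments. Unset Strict Implicit. Unset Printing Implicit Defensive.
Local Open Scope fset_scope.

(* A pure simplicial complex is represented by its facet hypergraph: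
   a finite set of facets, each a finite set of vertices (labelled by nat). *)
Definition cplx := {fset {fset nat}}.

Definition Vtx (F : cplx) : {fset nat} := \bigcup_(f <- F) f.

(* Concrete realization of the connected sum K1 #_psi K2.
   h relabels the vertices of K2: on f2 it is the inverse of the bijection
   psi : f1 -> f2 (so h maps f2 bijectively onto f1), and every other vertex
   of K2 is sent injectively to a fresh label not used by K1. *)
Definition ConnSum (K1 : cplx) (f1 : {fset nat}) (K2 : cplx) (f2 : {fset nat})
    (h : nat -> nat) (K : cplx) : Prop :=
  [/\ f1 \in K1 /\ f2 \in K2,
      ({in Vtx K2 &, injective h}),
      h @` f2 = f1,
      (forall v, v \in Vtx K2 -> v \notin f2 -> h v \notin Vtx K1) &
      K = (K1 `\ f1) `|` [fset h @` g | g : {fset nat} in K2 `\ f2]].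

(* boundary of the (d+1)-simplex on vertices 0..d+1 *)
Definition simplexV (d : nat) : {fset nat} := [fset i | i in iota 0 d.+2].
Definition Simplex (d : nat) : cplx := [fset simplexV d `\ i | i in simplexV d].

(* boundary of the (d+1)-dimensional cross polytope: vertices 0..2d+1,
   antipodal pairs {2i, 2i+1} for i <= d; a facet picks one vertex per pair *)
Definition Cross (d : nat) : cplx :=
  [fset [fset (2 * val i + (s : {ffun 'I_d.+1 -> bool}) i)%N | i : 'I_d.+1]
    | s : {ffun 'I_d.+1 -> bool}].

Definition antip (v : nat) : nat := if odd v then v.-1 else v.+1.

(* CPlus d K ap base : K is a realization of C^d_+ = C^d #_{psi_S} S^d
   (any facet f of C^d, any facet g = simplexV d \ {i} of S^d, any bijection),
   ap is its apex vertex (image of the vertex i of S^d not in g) and base is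
   its base facet (the facet of C^d antipodal to f). *)
Definition CPlus (d : nat) (K : cplx) (ap : nat) (base : {fset nat}) : Prop :=
  exists (f : {fset nat}) (i : nat) (h : nat -> nat),
    [/\ i \in simplexV d,
        ConnSum (Cross d) f (Simplex d) (simplexV d `\ i) h K,
        ap = h i &
        base = antip @` f].

(* IsX d k K a : K is a realization of X^d_k (with some choices) and a is its
   apex vertex. *)
Inductive IsX (d : nat) : nat -> cplx -> nat -> Prop :=
  | IsX1 a : a \in simplexV d -> IsX d 1 (Simplex d) a
  | IsXS k K a f Kc ap base h K' :
      IsX d k K a ->
      f \in K -> a \in f ->
      CPlus d Kc ap base ->
      ConnSum K f Kc base h K' ->
      IsX d k.+1 K' (h ap).

Definition ftransversal (F : cplx) (T : {fset nat}) : bool :=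
  all (fun f => f `&` T != fset0) F.

Definition tau (F : cplx) : nat :=
  \big[minn/#|` Vtx F|]_(T <- fpowerset (Vtx F) | ftransversal F T) #|` T|.

From mathcomp Require Import all_boot all_order.
From mathcomp Require Import finmap zify.
(* Induction on k with a stronger invariant [x_invariant]: the minimum
   transversals have 2k vertices, and every transversal containing a facet
   through the apex has more.  Gluing C^d_+ along a facet f through the old apex
   adds a set N of d+2 new vertices.  A transversal T of the new complex splits
   into its old part To = T ∩ V(K) and its new part, which pulls back to a
   transversal S of C^d_+ minus its base facet.  If To meets f, then To is a
   transversal of K, and S has at least two new vertices unless it contains the
   whole base, which forces f ⊆ To and hence |To| > 2k by the apex property.  If
   To misses f, then S misses the base and so contains every new vertex except
   possibly the apex, i.e. at least d+1 >= 3 of them, while To plus the old apex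
   is a transversal of K.  Conversely, an old minimum transversal extends by two
   new vertices.  The facets through the new apex come from the simplex and have
   d+1 >= 3 new vertices, which gives the apex property. *)

Set Implicit Arguments. Unset Strict Implicit. Unset Printing Implicit Defensive.
Local Open Scope fset_scope.
Local Open Scope nat_scope.

Lemma cardfs_ge2 (T : choiceType) (A : {fset T}) x y :
  x \in A -> y \in A -> x != y -> 2 <= #|` A|.
Proof.
move=> xA yA xy; have <- : #|` [fset x; y]| = 2 by rewrite cardfs2 xy.
by apply: fsubset_leq_card; apply/fsubsetP => z; rewrite !inE => /orP[]/eqP->.
Qed.

Lemma eq_fsetD1 (T : choiceType) (A : {fset T}) i j :
  j \in A -> (A `\ j == A `\ i) = (j == i).
Proof.
move=> jA; apply/eqP/eqP => [eA|->//]; apply/eqP; apply: contraT => ji.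
by move: (in_fsetD1 A i j); rewrite -eA ji jA in_fsetD1 eqxx.
Qed.

Lemma VtxP (F : cplx) v : reflect (exists2 g, g \in F & v \in g) (v \in Vtx F).
Proof.
apply: (iffP (bigfcupP _ _ _ _)) => [[g /andP[gF _] vg]|[g gF vg]];
  by exists g => //; rewrite gF.
Qed.

Lemma mem_Vtx (F : cplx) g v : g \in F -> v \in g -> v \in Vtx F.
Proof. by move=> gF vg; apply/VtxP; exists g. Qed.

Lemma Vtx_subset (F G : cplx) : F `<=` G -> Vtx F `<=` Vtx G.
Proof.
by move=> FG; apply/fsubsetP => v /VtxP[g /(fsubsetP FG) gG]; apply: mem_Vtx.
Qed.

Lemma VtxU (F G : cplx) : Vtx (F `|` G) = Vtx F `|` Vtx G.
Proof.
apply/fsetP => v; rewrite in_fsetU; apply/VtxP/orP.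
  by case=> g; rewrite in_fsetU => /orP[] gF vg; [left|right]; apply: mem_Vtx vg.
by case=> /VtxP[g gF vg]; exists g; rewrite // in_fsetU gF ?orbT.
Qed.

Lemma Vtx_imfset (F : cplx) (h : nat -> nat) :
  Vtx [fset h @` g | g : {fset nat} in F] = h @` Vtx F.
Proof.
apply/fsetP => v; apply/VtxP/imfsetP => [[_ /imfsetP[g /= gF ->]]|].
  by case/imfsetP => u /= ug ->; exists u => //; apply: mem_Vtx ug.
case=> u /= /VtxP[g gF ug] ->; exists (h @` g); first by apply/imfsetP; exists g.
exact: in_imfset.
Qed.

Lemma VtxD1U (F : cplx) f : f \in F -> Vtx (F `\ f) `|` f = Vtx F.
Proof.
move=> fF; apply/fsetP => v; rewrite in_fsetU; apply/orP/VtxP.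
  case=> [/VtxP[g /fsetD1P[_ gF] vg]|vf]; [by exists g | by exists f].
case=> g gF vg; case: (g =P f) => [<-|/eqP gf]; [by right | left].
by apply: mem_Vtx vg; rewrite in_fsetD1 gf.
Qed.

Lemma fsubset_Vtx (F : cplx) g : g \in F -> g `<=` Vtx F.
Proof. by move=> gF; apply/fsubsetP => v; apply: mem_Vtx. Qed.

Lemma transversalP (F : cplx) T :
  reflect (forall g, g \in F -> exists2 x, x \in g & x \in T) (ftransversal F T).
Proof.
apply: (iffP allP) => hitT g /hitT.
  by case/fset0Pn => x /fsetIP[]; exists x.
by case=> x xg xT; apply/fset0Pn; exists x; apply/fsetIP.
Qed.

Lemma transversalS (F : cplx) T T' :
  T `<=` T' -> ftransversal F T -> ftransversal F T'.
Proof.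
move=> TT' /transversalP hitT; apply/transversalP => g /hitT[x xg xT].
by exists x; rewrite ?(fsubsetP TT').
Qed.

Lemma transversalD1 (F : cplx) f T : ftransversal (F `\ f) T ->
  (exists2 x, x \in f & x \in T) -> ftransversal F T.
Proof.
move=> /transversalP hitT hitf; apply/transversalP => g gF.
by case: (g =P f) => [->//|/eqP gf]; apply: hitT; rewrite in_fsetD1 gf.
Qed.

Lemma bigmin_leq (I : eqType) (r : seq I) (P : pred I) (F : I -> nat) x i :
  i \in r -> P i -> \big[minn/x]_(j <- r | P j) F j <= F i.
Proof.
elim: r => //= j r IH; rewrite in_cons big_cons => /predU1P[<- ->|ir Pi].
  exact: geq_minl.
by case: (P j); rewrite ?geq_min IH ?orbT.
Qed.

Lemma tau_eq (F : cplx) m :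
  (exists2 T, T `<=` Vtx F & ftransversal F T /\ #|` T| = m) ->
  (forall T, ftransversal F T -> m <= #|` T|) ->
  tau F = m.
Proof.
move=> [T0 T0V [T0t <-]] lb; apply/eqP; rewrite eqn_leq; apply/andP; split.
  by rewrite /tau bigmin_leq ?fpowersetE.
rewrite /tau big_seq_cond; apply: (big_ind (leq #|` T0|)).
- exact: fsubset_leq_card.
- by move=> x y ? ?; rewrite leq_min; apply/andP.
- by move=> T /andP[_ Tt]; apply: lb.
Qed.

Section ConnectedSum.
Variables (K1 : cplx) (f1 : {fset nat}) (K2 : cplx) (f2 : {fset nat})
  (h : nat -> nat) (K : cplx).
Hypothesis CS : ConnSum K1 f1 K2 f2 h K.

Lemma connsum_memP g :
  g \in K -> g \in K1 `\ f1 \/ exists2 g2, g2 \in K2 `\ f2 & g = h @` g2.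
Proof.
case: CS => _ _ _ _ ->; rewrite in_fsetU.
by case/orP => [|/imfsetP[g2 /= g2K ->]]; [left | right; exists g2].
Qed.

Lemma connsum_memD1 g : g \in K1 `\ f1 -> g \in K.
Proof. by case: CS => _ _ _ _ -> gK; rewrite in_fsetU gK. Qed.

Lemma connsum_mem_imfset g : g \in K2 `\ f2 -> h @` g \in K.
Proof.
case: CS => _ _ _ _ -> gK; apply/fsetUP; right; exact: in_imfset.
Qed.

Lemma connsum_Vtx : Vtx K = Vtx (K1 `\ f1) `|` h @` Vtx (K2 `\ f2).
Proof. by case: CS => _ _ _ _ ->; rewrite VtxU Vtx_imfset. Qed.

End ConnectedSum.

Record x_invariant (d k : nat) (K : cplx) (a : nat) : Prop := {
  x_card_Vtx : #|` Vtx K| = k * (d + 2);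
  x_transversal : exists2 T, T `<=` Vtx K & ftransversal K T /\ #|` T| = 2 * k;
  x_transversal_lb : forall T, ftransversal K T -> 2 * k <= #|` T|;
  x_apex_transversal_lb : forall T, ftransversal K T ->
    forall F, F \in K -> a \in F -> F `<=` T -> 2 * k < #|` T| }.

Lemma mem_simplexV d v : (v \in simplexV d) = (v < d.+2).
Proof. by rewrite /simplexV in_fset mem_iota. Qed.

Lemma card_simplexV d : #|` simplexV d| = d.+2.
Proof. by rewrite /simplexV card_fseq undup_id ?iota_uniq ?size_iota. Qed.

Lemma card_simplexVD1 d i : i \in simplexV d -> #|` simplexV d `\ i| = d.+1.
Proof. by move=> iS; move: (card_simplexV d); rewrite (cardfsD1 i) iS => -[]. Qed.

Lemma SimplexP d g :
  reflect (exists2 i, i \in simplexV d & g = simplexV d `\ i) (g \in Simplex d).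
Proof. exact: imfsetP. Qed.

Lemma Vtx_Simplex d : Vtx (Simplex d) = simplexV d.
Proof.
apply/fsetP => v; apply/VtxP/idP => [[_ /SimplexP[i _ ->] /fsetD1P[]//]|vS].
exists (simplexV d `\ nat_of_bool (v == 0)).
  apply/SimplexP; exists (nat_of_bool (v == 0)) => //.
  by rewrite mem_simplexV; case: (v == 0).
by rewrite in_fsetD1 vS andbT; case: (v =P 0) => [->|/eqP].
Qed.

Lemma Simplex_x_invariant d a :
  2 <= d -> a \in simplexV d -> x_invariant d 1 (Simplex d) a.
Proof.
move=> d_ge2 aS; have facetD1 i : i \in simplexV d -> simplexV d `\ i \in Simplex d.
  by move=> iS; apply/SimplexP; exists i.
split.
- by rewrite Vtx_Simplex card_simplexV mul1n addn2.
- exists [fset 0; 1].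
    by apply/fsubsetP => v; rewrite Vtx_Simplex mem_simplexV !inE => /orP[]/eqP->.
  split; last by rewrite cardfs2.
  apply/transversalP => g /SimplexP[i iS ->].
  exists (nat_of_bool (i == 0)); last by rewrite !in_fset2; case: (i == 0).
  by rewrite in_fsetD1 mem_simplexV; case: i {iS} => [|[|i]].
- move=> T /transversalP hitT.
  have S0 : 0 \in simplexV d by rewrite mem_simplexV.
  have [x /fsetD1P[_ xS] xT] := hitT _ (facetD1 0 S0).
  have [y /fsetD1P[yx _] yT] := hitT _ (facetD1 x xS).
  exact: cardfs_ge2 yT xT yx.
- move=> T _ F /SimplexP[i iS ->] _ /fsubset_leq_card.
  by rewrite card_simplexVD1 // muln1; apply: leq_trans.
Qed.

(* The properties of C^d_+, with apex [ap] and base facet [base], that the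
   induction step uses; [N] is the set of its vertices outside [base]. *)
Record gadget (d : nat) (Kc : cplx) (ap : nat) (base N : {fset nat}) : Prop := {
  gadget_disjoint : [disjoint N & base]%fset;
  gadget_Vtx : Vtx (Kc `\ base) = base `|` N;
  gadget_card : #|` N| = d.+2;
  gadget_apex : ap \in N;
  gadget_base_sub : forall S, ftransversal (Kc `\ base) S ->
    #|` S `&` N| <= 1 -> base `<=` S;
  gadget_new_sub : forall S, ftransversal (Kc `\ base) S ->
    [disjoint base & S]%fset -> N `\ ap `<=` S;
  gadget_apex_facet : forall g, g \in Kc -> ap \in g -> g `<=` N /\ 3 <= #|` g|;
  gadget_cover : forall b, b \in base -> exists x y, [/\ x \in N, y \in N, x != y &
    ftransversal (Kc `\ base) [fset b; x; y]];
  gadget_new_facet : exists2 g, g \in Kc `\ base & g `<=` N }.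

Section GlueGadget.
Variables (d k : nat) (K : cplx) (a : nat) (f : {fset nat}) (Kc : cplx)
  (ap : nat) (base N : {fset nat}) (h : nat -> nat) (K' : cplx).
Hypotheses (d_ge2 : 2 <= d) (XK : x_invariant d k K a) (fK : f \in K) (af : a \in f)
  (GKc : gadget d Kc ap base N) (CS : ConnSum K f Kc base h K').

Lemma glue_inj : {in base `|` N &, injective h}.
Proof.
case: CS => [[baseKc _] inj _ _ _] x y; rewrite -(gadget_Vtx GKc) => xV yV.
by apply: inj; apply: (fsubsetP (Vtx_subset (fsubD1set Kc base))).
Qed.

Lemma glue_base : h @` base = f.
Proof. by case: CS. Qed.

Lemma glue_fresh n : n \in N -> h n \notin Vtx K.
Proof.
move=> nN; case: CS => _ _ _ fresh _; apply: fresh.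
  apply: (fsubsetP (Vtx_subset (fsubD1set Kc base))).
  by rewrite (gadget_Vtx GKc) in_fsetU nN orbT.
exact: (fdisjointP (gadget_disjoint GKc)).
Qed.

Lemma glue_Vtx : Vtx K' = Vtx K `|` h @` N.
Proof.
by rewrite (connsum_Vtx CS) (gadget_Vtx GKc) imfsetU glue_base fsetUA VtxD1U.
Qed.

Lemma glue_card_Vtx : #|` Vtx K'| = k.+1 * (d + 2).
Proof.
have disj : [disjoint Vtx K & h @` N]%fset.
  apply/fdisjointP => v vK; apply/imfsetP => -[n /= nN ev].
  by case/negP: (glue_fresh nN); rewrite -ev.
have cardN : #|` h @` N| = d.+2.
  rewrite -(gadget_card GKc); apply/eqP/card_in_imfsetP => x y xN yN.
  by apply: glue_inj; rewrite in_fsetU ?xN ?yN orbT.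
rewrite glue_Vtx cardfsU (eqP disj) cardfs0 subn0 cardN (x_card_Vtx XK); lia.
Qed.

Lemma glue_transversal :
  exists2 T, T `<=` Vtx K' & ftransversal K' T /\ #|` T| = 2 * k.+1.
Proof.
have [T0 T0V [/transversalP hitT0 cardT0]] := x_transversal XK.
have [u] := hitT0 f fK; rewrite -glue_base => /imfsetP[b /= bb ->] hbT0.
have [x [y [xN yN xy /transversalP hitbxy]]] := gadget_cover GKc bb.
have hN_T0 n : n \in N -> h n \notin T0.
  by move=> nN; apply: contra (glue_fresh nN); apply: (fsubsetP T0V).
exists (h x |` (h y |` T0)).
  rewrite glue_Vtx !fsubUset !fsub1set !in_fsetU !in_imfset ?orbT //=.
  by apply: fsubset_trans T0V (fsubsetUl _ _).
split.
  apply/transversalP => g /(connsum_memP CS)[/fsetD1P[_ gK]|[g2 g2Kc ->]].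
    by have [v vg vT0] := hitT0 g gK; exists v; rewrite // !in_fset1U vT0 !orbT.
  have [z zg2 zbxy] := hitbxy g2 g2Kc; exists (h z); first exact: in_imfset.
  by move: zbxy; rewrite !inE -orbA => /or3P[]/eqP->; rewrite ?hbT0 ?eqxx ?orbT.
have hxy : h x != h y.
  by apply: contra xy => /eqP/glue_inj-> //; rewrite in_fsetU ?xN ?yN orbT.
by rewrite !cardfsU1 in_fset1U negb_or hxy !hN_T0 // cardT0; lia.
Qed.

Section Pullback.
Variable T : {fset nat}.
Hypothesis TK' : ftransversal K' T.

Let To := T `&` Vtx K.
Let S := [fset v in base `|` N | h v \in T].

Lemma mem_pullback v : (v \in S) = (v \in base `|` N) && (h v \in T).
Proof. by rewrite !inE. Qed.

Lemma glue_card_split : #|` To| + #|` S `&` N| <= #|` T|.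
Proof.
have SN_BN : S `&` N `<=` base `|` N.
  by apply/fsubsetP => v /fsetIP[_ vN]; rewrite in_fsetU vN orbT.
have <- : #|` h @` (S `&` N)| = #|` S `&` N|.
  apply/eqP/card_in_imfsetP => x y xSN ySN.
  by apply: glue_inj; apply: (fsubsetP SN_BN).
rewrite -(cardfsID (Vtx K) T) leq_add2l fsubset_leq_card //.
apply/fsubsetP => _ /imfsetP[v /= /fsetIP[vS vN] ->].
by move: vS; rewrite mem_pullback in_fsetD glue_fresh // => /andP[].
Qed.

Lemma glue_pullback_transversal : ftransversal (Kc `\ base) S.
Proof.
apply/transversalP => g gKc.
have [_ /imfsetP[v /= vg ->] hvT] :=
  transversalP _ _ TK' _ (connsum_mem_imfset CS gKc).
exists v; rewrite // mem_pullback hvT -(gadget_Vtx GKc) andbT.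
exact: mem_Vtx vg.
Qed.

Lemma glue_pullback_new : 1 <= #|` S `&` N|.
Proof.
have [g gKc gN] := gadget_new_facet GKc.
have [v vg vS] := transversalP _ _ glue_pullback_transversal g gKc.
by rewrite (cardfsD1 v) in_fsetI vS (fsubsetP gN).
Qed.

Lemma glue_restrict_transversal : ftransversal (K `\ f) To.
Proof.
apply/transversalP => g gKf; have /fsetD1P[_ gK] := gKf.
have [v vg vT] := transversalP _ _ TK' _ (connsum_memD1 CS gKf).
by exists v; rewrite // in_fsetI vT (mem_Vtx gK vg).
Qed.

Lemma glue_To_lb : 2 * k <= #|` To| + 1.
Proof.
apply: leq_trans (x_transversal_lb XK (T := a |` To) _) _.
  apply: transversalD1 (ex_intro2 _ _ a af (fset1U1 _ _)).
  exact: transversalS (fsubsetU1 _ _) glue_restrict_transversal.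
by rewrite cardfsU1 addnC leq_add2l leq_b1.
Qed.

Lemma glue_meet_transversal : ~~ [disjoint f & T]%fset -> ftransversal K To.
Proof.
case/fset0Pn => x /fsetIP[xf xT]; apply: transversalD1 glue_restrict_transversal _.
by exists x; rewrite // in_fsetI xT (mem_Vtx fK xf).
Qed.

Lemma glue_base_sub : #|` S `&` N| <= 1 -> f `<=` To.
Proof.
move=> /(gadget_base_sub GKc glue_pullback_transversal) baseS.
apply/fsubsetP => y; rewrite -{1}glue_base => /imfsetP[b /= bb ->].
have := fsubsetP baseS b bb; rewrite mem_pullback => /andP[_ hbT].
by rewrite in_fsetI hbT (mem_Vtx fK) // -glue_base in_imfset.
Qed.

Lemma glue_miss_card : [disjoint f & T]%fset -> d.+1 + (ap \in S) <= #|` S `&` N|.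
Proof.
move=> fT; have NapS : N `\ ap `<=` S.
  apply: (gadget_new_sub GKc glue_pullback_transversal).
  apply/fdisjointP => b bb; rewrite mem_pullback negb_and orbC.
  by rewrite (fdisjointP fT) // -glue_base in_imfset.
have cardNap : #|` N `\ ap| = d.+1.
  by move: (gadget_card GKc); rewrite (cardfsD1 ap) (gadget_apex GKc) => -[].
rewrite (cardfsD1 ap (S `&` N)) in_fsetI (gadget_apex GKc) andbT addnC leq_add2l.
rewrite -cardNap fsubset_leq_card //; apply/fsubsetP => v /fsetD1P[vap vN].
by rewrite in_fsetD1 vap in_fsetI vN (fsubsetP NapS) // in_fsetD1 vap.
Qed.

Lemma glue_apex_pullback F : F \in K' -> h ap \in F -> F `<=` T ->
  3 <= #|` S `&` N| /\ ap \in S.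
Proof.
move=> /(connsum_memP CS)[/fsetD1P[_ FK] apF|[g gKc ->] /imfsetP[v /= vg hv] FT].
  by case/negP: (glue_fresh (gadget_apex GKc)); apply: mem_Vtx apF.
have gBN : g `<=` base `|` N by rewrite -(gadget_Vtx GKc) fsubset_Vtx.
have /fsetD1P[_ gKc'] := gKc.
have apg : ap \in g.
  have apBN : ap \in base `|` N by rewrite in_fsetU (gadget_apex GKc) orbT.
  by rewrite (glue_inj apBN (fsubsetP gBN v vg) hv).
have [gN g3] := gadget_apex_facet GKc gKc' apg.
have gS : g `<=` S `&` N.
  apply/fsubsetP => y yg; rewrite in_fsetI mem_pullback (fsubsetP gBN) //.
  by rewrite (fsubsetP gN) // (fsubsetP FT) // in_imfset.
split; first exact: leq_trans g3 (fsubset_leq_card gS).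
by have /fsetIP[] := fsubsetP gS ap apg.
Qed.

Lemma glue_transversal_lb : 2 * k.+1 <= #|` T|.
Proof.
have := glue_card_split; have := glue_pullback_new.
have [fT|/glue_meet_transversal ToK] := boolP [disjoint f & T]%fset.
  by have := glue_miss_card fT; have := glue_To_lb; lia.
have := x_transversal_lb XK ToK; have [|SN_le1] := leqP 2 #|` S `&` N|; first lia.
by have := x_apex_transversal_lb XK ToK fK af (glue_base_sub SN_le1); lia.
Qed.

Lemma glue_apex_transversal_lb F :
  F \in K' -> h ap \in F -> F `<=` T -> 2 * k.+1 < #|` T|.
Proof.
move=> FK' apF FT; have [SN3 apS] := glue_apex_pullback FK' apF FT.
have := glue_card_split.
have [fT|/glue_meet_transversal/(x_transversal_lb XK)] := boolP [disjoint f & T]%fset.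
  by have := glue_miss_card fT; rewrite apS; have := glue_To_lb; lia.
lia.
Qed.

End Pullback.

Lemma glue_x_invariant : x_invariant d k.+1 K' (h ap).
Proof.
split; [exact: glue_card_Vtx | exact: glue_transversal | |].
- exact: glue_transversal_lb.
- by move=> T TK' F; apply: glue_apex_transversal_lb.
Qed.

End GlueGadget.

Lemma bit_decomp v : exists m (b : bool), v = 2 * m + b.
Proof. by exists v./2, (odd v); rewrite mulnC muln2 addnC odd_double_half. Qed.

Lemma antipE m (b : bool) : antip (2 * m + b) = 2 * m + ~~ b.
Proof. by rewrite /antip oddD oddM /=; case: b; rewrite /= ?addn0 ?addn1. Qed.

Lemma antipK : involutive antip.
Proof. by move=> v; have [m [b ->]] := bit_decomp v; rewrite !antipE negbK. Qed.

Lemma antip_inj : injective antip.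
Proof. exact: inv_inj antipK. Qed.

Lemma antip_neq v : antip v != v.
Proof. by have [m [b ->]] := bit_decomp v; rewrite antipE; case: b => /=; lia. Qed.

Lemma antip_lt n v : v < 2 * n -> antip v < 2 * n.
Proof. by have [m [b ->]] := bit_decomp v; rewrite antipE; case: b => /=; lia. Qed.

Lemma mem_antip (A : {fset nat}) v : (v \in antip @` A) = (antip v \in A).
Proof. by rewrite -{1}[v]antipK (mem_imfset _ _ antip_inj). Qed.

Definition cross_facet d (g : {fset nat}) :=
  (forall v, v \in g -> v < 2 * d.+1) /\
  (forall v, v < 2 * d.+1 -> (v \in g) = (antip v \notin g)).

Definition cross_of d (s : {ffun 'I_d.+1 -> bool}) : {fset nat} :=
  [fset 2 * val i + s i | i : 'I_d.+1].

Lemma mem_cross_of d (s : {ffun 'I_d.+1 -> bool}) m (b : bool) (lt_md : m < d.+1) :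
  (2 * m + b \in cross_of s) = (s (Ordinal lt_md) == b).
Proof.
apply/imfsetP/eqP => [[i _ /= e]|<-]; last by exists (Ordinal lt_md).
have [ei ->] : m = i /\ b = s i by move: e; case: b; case: (s i) => /=; lia.
by congr (s _); apply: val_inj.
Qed.

Lemma CrossP d g : g \in Cross d <-> cross_facet d g.
Proof.
have bit_lt m (b : bool) : 2 * m + b < 2 * d.+1 -> m < d.+1 by case: b => /=; lia.
split.
  case/imfsetP => s _ ->; split => [_ /imfsetP[i _ ->]|v].
    by have := ltn_ord i; case: (s i) => /=; lia.
  have [m [b ->]] := bit_decomp v => /bit_lt lt_md.
  by rewrite antipE !(mem_cross_of _ _ lt_md); case: (s _); case: b.
case=> g_lt g_antip; apply/imfsetP.
exists [ffun i : 'I_d.+1 => 2 * val i + 1 \in g] => //.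
apply/fsetP => v; have [m [b ->]] := bit_decomp v; apply/idP/idP => [vg|].
  have lt_md := bit_lt _ _ (g_lt _ vg); rewrite (mem_cross_of _ _ lt_md) ffunE /=.
  case: b vg (g_antip _ (g_lt _ vg)) => /= vg; first by rewrite vg.
  by rewrite vg (antipE _ false) /= => /esym/negbTE->.
case/imfsetP => i _ ->; rewrite ffunE; case: (boolP (2 * i + 1 \in g)) => // odd_notin.
have lt_2i : 2 * i + false < 2 * d.+1 by have := ltn_ord i; lia.
by rewrite (g_antip _ lt_2i) antipE.
Qed.

Lemma cross_facet_antip d g : cross_facet d g -> cross_facet d (antip @` g).
Proof.
case=> g_lt g_antip; split => [v|v v_lt]; rewrite !mem_antip.
  by move/g_lt/antip_lt; rewrite antipK.
by rewrite (g_antip _ (antip_lt v_lt)) antipK.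
Qed.

Lemma cross_facet_swap d g w :
  cross_facet d g -> w \in g -> cross_facet d (antip w |` (g `\ w)).
Proof.
case=> g_lt g_antip wg; split => [v|v v_lt].
  by rewrite in_fset1U in_fsetD1 => /orP[/eqP->|/andP[_ /g_lt//]]; apply/antip_lt/g_lt.
rewrite !in_fset1U !in_fsetD1.
have [->|vw] := eqVneq v w.
  by rewrite [w == _]eq_sym (negbTE (antip_neq w)) !eqxx.
have [->|vaw] := eqVneq v (antip w).
  by rewrite antipK !eqxx [w == _]eq_sym (negbTE (antip_neq w)).
rewrite /= (inj_eq antip_inj) (negbTE vw) /=.
have -> : antip v != w by apply: contra vaw => /eqP <-; rewrite antipK.
exact: g_antip.
Qed.

Section CrossPlus.
Variables (d : nat) (Kc : cplx) (f : {fset nat}) (i : nat) (h : nat -> nat).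
Hypotheses (d_ge2 : 2 <= d) (iS : i \in simplexV d)
  (CS : ConnSum (Cross d) f (Simplex d) (simplexV d `\ i) h Kc).

Local Notation SV := (simplexV d).
Local Notation ap := (h i).
Local Notation base := (antip @` f).

(* The facets inherited from S^d; [top_facet i] is the glued facet [f]. *)
Definition top_facet j := h @` (SV `\ j).

Lemma cross_f : cross_facet d f.
Proof. by case: CS => [[/CrossP fC _] _ _ _ _]. Qed.

Lemma cross_base : cross_facet d base.
Proof. exact: cross_facet_antip cross_f. Qed.

Lemma plus_inj : {in SV &, injective h}.
Proof. by case: CS => _ inj _ _ _; rewrite Vtx_Simplex in inj. Qed.

Lemma plus_glue : top_facet i = f.
Proof. by case: CS. Qed.

Lemma card_top_facet j : j \in SV -> #|` top_facet j| = d.+1.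
Proof.
move=> jS; rewrite -(card_simplexVD1 jS); apply/eqP/card_in_imfsetP => x y.
by move=> /fsetD1P[_ xS] /fsetD1P[_ yS]; apply: plus_inj.
Qed.

Lemma apex_notin_Cross g : g \in Cross d -> ap \notin g.
Proof.
move=> gC; case: CS => _ _ _ fresh _.
have : ap \notin Vtx (Cross d) by apply: fresh; rewrite ?Vtx_Simplex // in_fsetD1 eqxx.
by apply: contra; apply: mem_Vtx.
Qed.

Lemma f_notin_base v : v \in f -> v \notin base.
Proof.
by move=> vf; have [f_lt f_antip] := cross_f; rewrite mem_antip -f_antip ?f_lt.
Qed.

Lemma base_notin_f b : b \in base -> b \notin f.
Proof.
by rewrite mem_antip => bf; apply: contraL bf => /f_notin_base; rewrite mem_antip.
Qed.

Lemma card_f : #|` f| = d.+1.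
Proof. by rewrite -plus_glue card_top_facet. Qed.

Lemma exists_other v : exists2 w, w \in f & w != v.
Proof.
have /fset0Pn[w /fsetD1P[wv wf]] : f `\ v != fset0.
  by rewrite -cardfs_eq0; have := cardfsD1 v f; rewrite card_f; case: (v \in f); lia.
by exists w.
Qed.

Lemma apex_notin_base : ap \notin base.
Proof. by apply/apex_notin_Cross/CrossP/cross_base. Qed.

Lemma apex_notin_f : ap \notin f.
Proof. by apply/apex_notin_Cross/CrossP/cross_f. Qed.

Lemma exists_top : exists2 j, j \in SV & j != i.
Proof.
exists (nat_of_bool (i == 0)); first by rewrite mem_simplexV; case: (i == 0).
by case: (i =P 0) => [->|/eqP]; rewrite // eq_sym.
Qed.

Lemma apex_top_facet j : j \in SV -> j != i -> ap \in top_facet j.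
Proof. by move=> jS ji; rewrite in_imfset // in_fsetD1 eq_sym ji. Qed.

Lemma top_facet_in j : j \in SV -> j != i -> top_facet j \in Kc `\ base.
Proof.
move=> jS ji; rewrite in_fsetD1 (connsum_mem_imfset CS) ?andbT.
  by apply: contraNneq apex_notin_base => <-; apply: apex_top_facet.
by rewrite in_fsetD1 eq_fsetD1 // ji; apply/SimplexP; exists j.
Qed.

Lemma top_facet_sub j : j \in SV -> top_facet j `<=` ap |` f.
Proof.
move=> jS; apply/fsubsetP => _ /imfsetP[x /= /fsetD1P[_ xS] ->].
rewrite in_fset1U -plus_glue; have [->|xi] := eqVneq x i; first by rewrite eqxx.
by rewrite in_imfset ?orbT // in_fsetD1 xi.
Qed.

Lemma top_facet_notin j : j \in SV -> h j \notin top_facet j.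
Proof.
move=> jS; apply/imfsetP => -[x /= /fsetD1P[xj xS] /(plus_inj jS xS) jx].
by rewrite jx eqxx in xj.
Qed.

Lemma plus_memP g : g \in Kc ->
  g \in Cross d `\ f \/ exists2 j, (j \in SV) && (j != i) & g = top_facet j.
Proof.
case/(connsum_memP CS) => [|[g2 /fsetD1P[g2i /SimplexP[j jS eg2]] ->]]; first by left.
by right; exists j; rewrite /top_facet -?eg2 // jS -(eq_fsetD1 _ jS) -eg2.
Qed.

Lemma cross_facetD1_in g : cross_facet d g -> g != f -> g != base -> g \in Kc `\ base.
Proof.
move=> /CrossP gC gf gbase; rewrite in_fsetD1 gbase (connsum_memD1 CS) //.
by rewrite in_fsetD1 gf.
Qed.

Lemma swap_base_in b : b \in base -> b |` (f `\ antip b) \in Kc `\ base.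
Proof.
move=> bb; have abf : antip b \in f by rewrite -mem_antip.
apply: cross_facetD1_in.
- by rewrite -{1}[b]antipK; apply: cross_facet_swap cross_f abf.
- by apply: contraNneq (base_notin_f bb) => <-; rewrite fset1U1.
- have [w wf wab] := exists_other (antip b); apply: contraNneq (f_notin_base wf) => <-.
  by rewrite in_fset1U in_fsetD1 wab wf orbT.
Qed.

Lemma swap_f_in v : v \in f -> v |` (base `\ antip v) \in Kc `\ base.
Proof.
move=> vf; have avb : antip v \in base by rewrite mem_antip antipK.
apply: cross_facetD1_in.
- by rewrite -{1}[v]antipK; apply: cross_facet_swap cross_base avb.
- have [w wf wv] := exists_other v.
  have awb : antip w \in base by rewrite mem_antip antipK.
  apply: contraNneq (base_notin_f awb) => <-.
  by rewrite in_fset1U in_fsetD1 (inj_eq antip_inj) wv awb orbT.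
- by apply: contraNneq (f_notin_base vf) => <-; rewrite fset1U1.
Qed.

Lemma plus_Vtx : Vtx (Kc `\ base) = base `|` (ap |` f).
Proof.
apply/fsetP => v; apply/VtxP/idP.
  case=> g /fsetD1P[_ /plus_memP[/fsetD1P[_ /CrossP[g_lt _]]|[j /andP[jS _] ->]]] vg.
    have [f_lt f_antip] := cross_f; rewrite in_fsetU in_fset1U mem_antip.
    by rewrite (f_antip _ (g_lt _ vg)); case: (antip v \in f); rewrite ?orbT.
  by rewrite in_fsetU (fsubsetP (top_facet_sub jS)) ?orbT.
rewrite in_fsetU in_fset1U => /orP[vb|/orP[/eqP->|vf]].
- by exists (v |` (f `\ antip v)); rewrite ?swap_base_in ?fset1U1.
- have [j jS ji] := exists_top.
  by exists (top_facet j); rewrite ?top_facet_in ?apex_top_facet.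
- by exists (v |` (base `\ antip v)); rewrite ?swap_f_in ?fset1U1.
Qed.

Lemma plus_base_sub S : ftransversal (Kc `\ base) S ->
  #|` S `&` (ap |` f)| <= 1 -> base `<=` S.
Proof.
move=> /transversalP hitS SN_le1.
have S_f z : z \in S -> z \notin f.
  move=> zS; apply/negP; rewrite -plus_glue => /imfsetP[j /= /fsetD1P[ji jS] ez].
  have [z' z'j z'S] := hitS _ (top_facet_in jS ji).
  have z'N : z' \in S `&` (ap |` f).
    by rewrite in_fsetI z'S (fsubsetP (top_facet_sub jS)).
  have zN : z \in S `&` (ap |` f).
    by rewrite in_fsetI zS in_fset1U -plus_glue ez in_imfset ?orbT // in_fsetD1 ji.
  have z'z : z' != z by apply: contraNneq (top_facet_notin jS) => e; rewrite -ez -e.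
  by have := cardfs_ge2 z'N zN z'z; rewrite ltnNge SN_le1.
apply/fsubsetP => b bb; have [z] := hitS _ (swap_base_in bb).
by rewrite in_fset1U in_fsetD1 => /orP[/eqP->//|/andP[_ zf] /S_f]; rewrite zf.
Qed.

Lemma plus_new_sub S : ftransversal (Kc `\ base) S ->
  [disjoint base & S]%fset -> (ap |` f) `\ ap `<=` S.
Proof.
move=> /transversalP hitS /fdisjointP baseS; apply/fsubsetP => v.
rewrite in_fsetD1 in_fset1U => /andP[/negbTE-> /= vf].
have [z] := hitS _ (swap_f_in vf); rewrite in_fset1U in_fsetD1 => /orP[/eqP->//|].
by case/andP => _ /baseS /negbTE->.
Qed.

Lemma plus_cover b : b \in base -> ftransversal (Kc `\ base) [fset b; ap; antip b].
Proof.
move=> bb; apply/transversalP => g /fsetD1P[_ /plus_memP[|[j /andP[jS ji] ->]]].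
  case/fsetD1P => _ /CrossP[_ g_antip]; have [b_lt _] := cross_base.
  have [bg|] := boolP (b \in g); first by exists b; rewrite // !inE eqxx.
  rewrite g_antip ?b_lt // negbK => abg.
  by exists (antip b); rewrite // !inE eqxx !orbT.
by exists ap; rewrite ?apex_top_facet // !inE eqxx orbT.
Qed.

Lemma CrossPlus_gadget : gadget d Kc ap base (ap |` f).
Proof.
split.
- apply/fdisjointP => v; rewrite in_fset1U => /orP[/eqP->|].
    exact: apex_notin_base.
  exact: f_notin_base.
- exact: plus_Vtx.
- by rewrite cardfsU1 apex_notin_f card_f.
- exact: fset1U1.
- exact: plus_base_sub.
- exact: plus_new_sub.
- move=> g /plus_memP[/fsetD1P[_ gC]|[j /andP[jS _] ->] _].
    by move/negP: (apex_notin_Cross gC).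
  by rewrite top_facet_sub // card_top_facet.
- move=> b bb; exists ap, (antip b); split; last exact: plus_cover.
  + exact: fset1U1.
  + by rewrite in_fset1U -mem_antip bb orbT.
  + by apply: contraNneq apex_notin_f => ->; rewrite -mem_antip.
- have [j jS ji] := exists_top.
  by exists (top_facet j); rewrite ?top_facet_in ?top_facet_sub.
Qed.

End CrossPlus.

Lemma IsX_x_invariant d k K a : 2 <= d -> IsX d k K a -> x_invariant d k K a.
Proof.
move=> d_ge2; elim=> [a0 aS|k0 K0 a0 f Kc ap base h K' _ XK0 fK af].
  exact: Simplex_x_invariant.
case=> [f' [i [h' [iS CS -> ->]]]] CS'.
exact: glue_x_invariant d_ge2 XK0 fK af (CrossPlus_gadget d_ge2 iS CS) CS'.
Qed.

Theorem mainTheorem14 (d k : nat) (K : cplx) (a : nat) :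
  2 <= d -> 1 <= k -> IsX d k K a ->
  [/\ #|` Vtx K| = (k * (d + 2))%N,
      tau K = (2 * k)%N &
      forall T : {fset nat}, T `<=` Vtx K -> ftransversal K T -> #|` T| = (2 * k)%N ->
        forall f, f \in K -> a \in f -> ~~ (f `<=` T)].
Proof.
move=> d_ge2 _ /(IsX_x_invariant d_ge2) [cardV minT lbT apexT]; split => //.
  exact: tau_eq minT lbT.
move=> T _ TK cardT F FK aF; apply/negP => FT.
by have := apexT T TK F FK aF FT; rewrite cardT ltnn.
Qed.
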